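(* If $\mathcal N\in\mathrm{Ch}(A'B',AB)$ is no-signaling from $A'$ to $B$, then $S_\infty[A|B]_{\mathcal N}\ge-\log|A|$.
   Context: All systems are finite-dimensional; $|X|$ denotes dimension; $\log$ base 2; $\mathrm{St}(X)$ density operators; $\mathrm{Ch}(X',X)$ quantum channels. $\mathcal R^{\mathbb 1}_{A'\to A}(X):=\operatorname{tr}(X)\mathbb 1_A$. $D_\infty(\rho\|\sigma):=\log\inf\{\lambda:\rho\le\lambda\sigma\}$; for a channel $\mathcal M$ and CP map $\mathcal M'$, $D_\infty[\mathcal M\|\mathcal M']:=\sup_{\rho\in\mathrm{St}(RX')}D_\infty((\mathrm{id}\otimes\mathcal M)(\rho)\|(\mathrm{id}\otimes\mathcal M')(\rho))$. Conditional channel min-entropy: $S_\infty[A|B]_{\mathcal N}:=-\inf_{\mathcal Q\in\mathrm{Ch}(B',B)}D_\infty[\mathcal N\|\mathcal R^{\mathbb 1}_{A'\to A}\otimes\mathcal Q]$. $\mathcal N$ is no-signaling (semicausal) from $A'$ to $B$ if there is $\mathcal Q^{\mathcal N}\in\mathrm{Ch}(B',B)$ with $\operatorname{tr}_A\circ\mathcal N=\operatorname{tr}_{A'}\otimes\mathcal Q^{\mathcal N}$. *)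

From HB Require Import structures.
From mathcomp Require Import all_boot all_order all_algebra.
From mathcomp Require Import complex mxtens.
From mathcomp Require Import boolp classical_sets reals constructive_ereal ereal exp.

Set Implicit Arguments.
Unset Strict Implicit.
Unset Printing Implicit Defensive.

Import Order.TTheory GRing.Theory Num.Theory.
Local Open Scope ring_scope.
Local Open Scope classical_set_scope.

Section Quantum.
Variable R : realType.
Local Notation C := (R[i]).

Definition adjmx m n (A : 'M[C]_(m, n)) : 'M[C]_(n, m) := (map_mx Num.conj A)^T.

Definition psd n (A : 'M[C]_n) : Prop :=
  forall v : 'cV[C]_n, 0 <= (adjmx v *m A *m v) 0 0.

Definition loewner n (A B : 'M[C]_n) : Prop := psd (B - A).

Definition state n (rho : 'M[C]_n) : Prop := psd rho /\ \tr rho = 1.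

Definition is_linmap m n (f : 'M[C]_m -> 'M[C]_n) : Prop :=
  forall (c : C) (X Y : 'M[C]_m), f (c *: X + Y) = c *: f X + f Y.

(* tensor product f (x) g of maps, the composite system being indexed by
   mxtens_index (consistent with the Kronecker product *t) *)
Definition tensmap m1 n1 m2 n2 (f : 'M[C]_m1 -> 'M[C]_n1)
  (g : 'M[C]_m2 -> 'M[C]_n2) : 'M[C]_(m1 * m2) -> 'M[C]_(n1 * n2) :=
  fun X => \sum_(i : 'I_m1) \sum_(j : 'I_m1) \sum_(k : 'I_m2) \sum_(l : 'I_m2)
     X (mxtens_index (i, k)) (mxtens_index (j, l)) *:
       (f (delta_mx i j) *t g (delta_mx k l)).

Definition idtens r m n (f : 'M[C]_m -> 'M[C]_n) : 'M[C]_(r * m) -> 'M[C]_(r * n) :=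
  tensmap (@id 'M[C]_r) f.

Definition is_cp m n (f : 'M[C]_m -> 'M[C]_n) : Prop :=
  forall (r : nat) (X : 'M[C]_(r * m)), psd X -> psd (idtens (r:=r) f X).

Definition is_tp m n (f : 'M[C]_m -> 'M[C]_n) : Prop :=
  forall X : 'M[C]_m, \tr (f X) = \tr X.

Definition is_cpmap m n (f : 'M[C]_m -> 'M[C]_n) : Prop :=
  is_linmap f /\ is_cp f.

Definition is_channel m n (f : 'M[C]_m -> 'M[C]_n) : Prop :=
  [/\ is_linmap f, is_cp f & is_tp f].

Definition replace1 a' a : 'M[C]_a' -> 'M[C]_a := fun X => \tr X *: 1%:M.

Definition ptrace1 a b (X : 'M[C]_(a * b)) : 'M[C]_b :=
  \matrix_(k, l) \sum_(i : 'I_a) X (mxtens_index (i, k)) (mxtens_index (i, l)).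

Definition no_signaling a' b' a b (N : 'M[C]_(a' * b') -> 'M[C]_(a * b)) : Prop :=
  exists Q : 'M[C]_b' -> 'M[C]_b, is_channel Q /\
    forall X : 'M[C]_(a' * b'), ptrace1 (N X) = Q (ptrace1 X).

Definition log2 (x : R) : R := ln x / ln 2.

Definition elog2 (x : \bar R) : \bar R :=
  match x with
  | EFin r => if r <= 0 then -oo%E else (log2 r)%:E
  | +oo%E => +oo%E
  | -oo%E => -oo%E
  end.

(* D_oo(rho || sigma) := log inf { lambda : rho <= lambda sigma }  (inf of empty = +oo) *)
Definition Dmax n (rho sigma : 'M[C]_n) : \bar R :=
  elog2 (ereal_inf [set (lam%:E)%E | lam in
                    [set lam : R | loewner rho ((lam%:C)%C *: sigma)]]).

Definition Dmax_chan m n (M M' : 'M[C]_m -> 'M[C]_n) : \bar R :=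
  ereal_sup [set x | exists (r : nat) (rho : 'M[C]_(r * m)),
                       state rho /\ x = Dmax (idtens (r:=r) M rho) (idtens (r:=r) M' rho)].

Definition Smin a' b' a b (N : 'M[C]_(a' * b') -> 'M[C]_(a * b)) : \bar R :=
  (- ereal_inf [set x | exists Q : 'M[C]_b' -> 'M[C]_b,
                   is_channel Q /\ x = Dmax_chan N (tensmap (@replace1 a' a) Q)])%E.

End Quantum.

From HB Require Import structures.
From mathcomp Require Import all_boot all_order all_algebra.
From mathcomp Require Import complex mxtens.
From mathcomp Require Import boolp classical_sets reals constructive_ereal ereal exp.
From mathcomp Require Import ring.

(* Take Q := Q^N in the infimum defining S_oo[A|B]_N.  For any input state
   rho on R A' B' (R a reference system), put Y := (id (x) N)(rho) >= 0;
   no-signaling turns (id (x) R^1 (x) Q^N)(rho) into Z := 1_A (x) tr_A Y, so it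
   suffices to show Y <= |A| Z for every Y >= 0 on R A B.  Split a test vector
   v = sum_i v_i along the basis of A and let v_(i->k) be the block v_i moved
   to position k.  Then <v, Z v> = sum_(i,k) <v_(i->k), Y v_(i->k)>, which is
   at least sum_i <v_i, Y v_i>, while <v, Y v> <= |A| sum_i <v_i, Y v_i>
   because the form of Y is positive semidefinite (Cauchy-Schwarz for a sum of
   |A| vectors).  Hence every D_oo(N(rho) || (R^1 (x) Q^N)(rho)) is at most
   log |A|. *)

Import Order.TTheory GRing.Theory Num.Theory.
Local Open Scope ring_scope.

Section Quantum.
Set Implicit Arguments.
Unset Strict Implicit.
Variable R : realType.
Local Notation C := R[i].

Lemma big_mxtens m n (F : 'I_(m * n) -> C) :
  \sum_u F u = \sum_(i < m) \sum_(j < n) F (mxtens_index (i, j)).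
Proof.
rewrite pair_bigA /= (reindex (@mxtens_index m n)) /=.
  by apply: eq_bigr => -[i j] _.
by exists (@mxtens_unindex m n) => x _;
  [exact: mxtens_indexK | exact: mxtens_unindexK].
Qed.

Lemma mxtrace_delta n (i j : 'I_n) : \tr (delta_mx i j : 'M[C]_n) = (i == j)%:R.
Proof.
rewrite /mxtrace (bigD1 i) //= [X in _ + X]big1 => [|k /negbTE nki].
  by rewrite mxE eqxx eq_sym addr0.
by rewrite mxE nki.
Qed.

Section LinearMap.
Variables m n : nat.
Variable f : 'M[C]_m -> 'M[C]_n.
Hypothesis linf : is_linmap f.

Lemma linmap0 : f 0 = 0.
Proof.
have := linf 1 0 0; rewrite !scale1r addr0 => f0D.
by apply: (addrI (f 0)); rewrite addr0 -f0D.
Qed.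

Lemma linmapD X Y : f (X + Y) = f X + f Y.
Proof. by have := linf 1 X Y; rewrite !scale1r. Qed.

Lemma linmapZ c X : f (c *: X) = c *: f X.
Proof. by rewrite -[_ *: X]addr0 linf linmap0 addr0. Qed.

Lemma linmap_sum I (r : seq I) (F : I -> 'M[C]_m) :
  f (\sum_(i <- r) F i) = \sum_(i <- r) f (F i).
Proof. exact: (big_morph f linmapD linmap0). Qed.

End LinearMap.

Lemma tensmapE m1 n1 m2 n2 (f : 'M[C]_m1 -> 'M[C]_n1) (g : 'M[C]_m2 -> 'M[C]_n2)
    X i1 i2 j1 j2 :
  tensmap f g X (mxtens_index (i1, i2)) (mxtens_index (j1, j2)) =
  \sum_i \sum_j \sum_k \sum_l X (mxtens_index (i, k)) (mxtens_index (j, l)) *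
     (f (delta_mx i j) i1 j1 * g (delta_mx k l) i2 j2).
Proof.
rewrite /tensmap; do 4 (rewrite summxE; apply: eq_bigr => ? _).
by rewrite mxE tensmxE.
Qed.

Lemma idtensE r m n (f : 'M[C]_m -> 'M[C]_n) X p x q y :
  idtens (r:=r) f X (mxtens_index (p, x)) (mxtens_index (q, y)) =
  \sum_s \sum_t X (mxtens_index (p, s)) (mxtens_index (q, t)) * f (delta_mx s t) x y.
Proof.
rewrite /idtens tensmapE (bigD1 p) //=.
rewrite [X in _ + X]big1 ?addr0 => [|i /negbTE nip]; last first.
  by do 3 (apply: big1 => ? _); rewrite mxE eq_sym nip mul0r mulr0.
rewrite (bigD1 q) //= [X in _ + X]big1 ?addr0 => [|j /negbTE njq]; last first.
  by do 2 (apply: big1 => ? _); rewrite mxE eq_sym njq andbF mul0r mulr0.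
do 2 (apply: eq_bigr => ? _).
by rewrite mxE !eqxx mul1r.
Qed.

Lemma tensmap_replace1E a' b' a b (Q : 'M[C]_b' -> 'M[C]_b) (linQ : is_linmap Q)
    (X : 'M[C]_(a' * b')) i j e f :
  tensmap (@replace1 R a' a) Q X (mxtens_index (i, e)) (mxtens_index (j, f)) =
  (i == j)%:R * Q (ptrace1 X) e f.
Proof.
have replace1E (s t : 'I_a') :
    @replace1 R a' a (delta_mx s t) i j = (s == t)%:R * (i == j)%:R.
  by rewrite /replace1 !mxE mxtrace_delta.
transitivity (\sum_s \sum_k \sum_l X (mxtens_index (s, k)) (mxtens_index (s, l)) *
                ((i == j)%:R * Q (delta_mx k l) e f)).
  rewrite tensmapE; apply: eq_bigr => s _.
  rewrite (bigD1 s) //= [X in _ + X]big1 => [|t /negbTE nts]; last first.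
    by do 2 (apply: big1 => ? _); rewrite replace1E eq_sym nts !mul0r mulr0.
  by rewrite addr0; do 2 (apply: eq_bigr => ? _); rewrite replace1E eqxx mul1r.
rewrite (matrix_sum_delta (ptrace1 X)) linmap_sum // summxE mulr_sumr.
rewrite exchange_big; apply: eq_bigr => k _.
rewrite linmap_sum // summxE mulr_sumr.
rewrite exchange_big; apply: eq_bigr => l _.
rewrite linmapZ // !mxE mulr_suml mulr_sumr; apply: eq_bigr => s _.
by rewrite mulrCA mulrA.
Qed.

Definition hform n (M : 'M[C]_n) (x y : 'cV[C]_n) : C :=
  \sum_u \sum_w (x u 0)^* * M u w * y w 0.

Lemma hformE n (M : 'M[C]_n) x y : (adjmx x *m M *m y) 0 0 = hform M x y.
Proof.
rewrite /hform mxE exchange_big; apply: eq_bigr => w _.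
rewrite mxE mulr_suml; apply: eq_bigr => u _.
by rewrite /adjmx !mxE.
Qed.

Lemma psd_hform_ge0 n (M : 'M[C]_n) v : psd M -> 0 <= hform M v v.
Proof. by move=> psdM; rewrite -hformE; exact: psdM. Qed.

Lemma hformBB n (M : 'M[C]_n) x y :
  hform M (x - y) (x - y) = hform M x x - hform M x y - hform M y x + hform M y y.
Proof.
rewrite /hform -!sumrB -big_split; apply: eq_bigr => u _.
rewrite -!sumrB -big_split; apply: eq_bigr => w _.
rewrite !mxE rmorphB /=; ring.
Qed.

Lemma hformZB n (M N : 'M[C]_n) c v :
  hform (c *: M - N) v v = c * hform M v v - hform N v v.
Proof.
rewrite /hform mulr_sumr -sumrB; apply: eq_bigr => u _.
rewrite mulr_sumr -sumrB; apply: eq_bigr => w _.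
rewrite !mxE; ring.
Qed.

Lemma hform_suml n (M : 'M[C]_n) I (r : seq I) (x : I -> 'cV[C]_n) y :
  hform M (\sum_(i <- r) x i) y = \sum_(i <- r) hform M (x i) y.
Proof.
rewrite /hform [RHS]exchange_big; apply: eq_bigr => u _.
rewrite [RHS]exchange_big; apply: eq_bigr => w _.
by rewrite summxE rmorph_sum !mulr_suml.
Qed.

Lemma hform_sumr n (M : 'M[C]_n) I (r : seq I) x (y : I -> 'cV[C]_n) :
  hform M x (\sum_(i <- r) y i) = \sum_(i <- r) hform M x (y i).
Proof.
rewrite /hform [RHS]exchange_big; apply: eq_bigr => u _.
rewrite [RHS]exchange_big; apply: eq_bigr => w _.
by rewrite summxE mulr_sumr.
Qed.

(* Expand [0 <= sum_(i,j) <w_i - w_j, M (w_i - w_j)>]. *)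
Lemma psd_hform_sum_le n (M : 'M[C]_n) a (w : 'I_a -> 'cV[C]_n) : psd M ->
  hform M (\sum_i w i) (\sum_i w i) <= a%:R * \sum_i hform M (w i) (w i).
Proof.
move=> psdM; set S := \sum_i hform M (w i) (w i).
have diff_ge0 : 0 <= \sum_i \sum_j hform M (w i - w j) (w i - w j).
  by do 2 (apply: sumr_ge0 => ? _); exact: psd_hform_ge0.
suff expand : \sum_i \sum_j hform M (w i - w j) (w i - w j) =
               2 * (a%:R * S - hform M (\sum_i w i) (\sum_i w i)).
  by rewrite expand pmulr_rge0 // subr_ge0 in diff_ge0.
under eq_bigr do under eq_bigr do rewrite hformBB.
under eq_bigr do rewrite big_split !sumrB /=.
rewrite big_split !sumrB /= hform_suml.
under [X in _ = _ * (_ - X)]eq_bigr do rewrite hform_sumr.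
rewrite [X in _ - _ - X + _]exchange_big /= sumr_const card_ord.
under eq_bigr do rewrite sumr_const card_ord.
rewrite sumrMnl -/S; ring.
Qed.

Definition mxtens3_index r a b p i e : 'I_(r * (a * b)) :=
  mxtens_index (p, mxtens_index (i, e)).
Local Notation ix3 := mxtens3_index.

Lemma big_mxtens3 r a b (F : 'I_(r * (a * b)) -> C) :
  \sum_u F u = \sum_p \sum_i \sum_e F (ix3 p i e).
Proof. by rewrite big_mxtens; apply: eq_bigr => p _; exact: big_mxtens. Qed.

Lemma hform_mxtens3 r a b (M : 'M[C]_(r * (a * b))) x y :
  hform M x y = \sum_p \sum_i \sum_e \sum_q \sum_j \sum_f
    (x (ix3 p i e) 0)^* * M (ix3 p i e) (ix3 q j f) * y (ix3 q j f) 0.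
Proof.
by rewrite /hform big_mxtens3; do 3 (apply: eq_bigr => ? _); exact: big_mxtens3.
Qed.

(* The block of [v] at position [i] of the middle factor, moved to position [k]. *)
Definition block_move r a b (v : 'cV[C]_(r * (a * b))) (i k : 'I_a) :
    'cV[C]_(r * (a * b)) :=
  \col_u (let: (p, ie) := mxtens_unindex u in let: (i', e) := mxtens_unindex ie in
          if i' == k then v (ix3 p i e) 0 else 0).

Lemma block_moveE r a b (v : 'cV[C]_(r * (a * b))) i k p k' e :
  block_move v i k (ix3 p k' e) 0 = (k' == k)%:R * v (ix3 p i e) 0.
Proof.
by rewrite mxE /mxtens3_index !mxtens_indexK; case: eqP; rewrite ?mul1r ?mul0r.
Qed.

Lemma sum_block_move r a b (v : 'cV[C]_(r * (a * b))) : v = \sum_i block_move v i i.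
Proof.
apply/matrixP => u z; rewrite summxE (ord1 z).
case: (mxtens_indexP u) => p ie; case: (mxtens_indexP ie) => i e.
under eq_bigr do rewrite block_moveE.
rewrite (bigD1 i) //= big1 ?addr0 ?eqxx ?mul1r // => j /negbTE nji.
by rewrite eq_sym nji mul0r.
Qed.

Lemma hform_block_move r a b (M : 'M[C]_(r * (a * b))) v i k :
  hform M (block_move v i k) (block_move v i k) = \sum_p \sum_e \sum_q \sum_f
    (v (ix3 p i e) 0)^* * M (ix3 p k e) (ix3 q k f) * v (ix3 q i f) 0.
Proof.
rewrite hform_mxtens3; apply: eq_bigr => p _.
rewrite (bigD1 k) //= [X in _ + X]big1 ?addr0 => [|j /negbTE njk]; last first.
  by do 4 (apply: big1 => ? _); rewrite block_moveE njk mul0r rmorph0 !mul0r.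
apply: eq_bigr => e _; apply: eq_bigr => q _.
rewrite (bigD1 k) //= [X in _ + X]big1 ?addr0 => [|j /negbTE njk]; last first.
  by apply: big1 => f _; rewrite !block_moveE njk mul0r mulr0.
by apply: eq_bigr => f _; rewrite !block_moveE eqxx !mul1r.
Qed.

Section PartialTraceBound.
Variables r a b : nat.
Variables Y Z : 'M[C]_(r * (a * b)).
Hypothesis psdY : psd Y.
Hypothesis ZE : forall p q i j e f,
  Z (ix3 p i e) (ix3 q j f) = (i == j)%:R * \sum_k Y (ix3 p k e) (ix3 q k f).

Lemma hform_ptrace v :
  hform Z v v = \sum_i \sum_k hform Y (block_move v i k) (block_move v i k).
Proof.
under [RHS]eq_bigr do under eq_bigr do rewrite hform_block_move.
rewrite hform_mxtens3.
transitivity (\sum_p \sum_i \sum_e \sum_q \sum_f \sum_k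
    (v (ix3 p i e) 0)^* * Y (ix3 p k e) (ix3 q k f) * v (ix3 q i f) 0).
  apply: eq_bigr => p _; apply: eq_bigr => i _.
  apply: eq_bigr => e _; apply: eq_bigr => q _.
  rewrite (bigD1 i) //= [X in _ + X]big1 ?addr0 => [|j /negbTE nji]; last first.
    by apply: big1 => f _; rewrite ZE eq_sym nji mul0r mulr0 mul0r.
  apply: eq_bigr => f _; rewrite ZE eqxx mul1r mulr_sumr mulr_suml.
  by apply: eq_bigr => k _.
rewrite exchange_big; apply: eq_bigr => i _.
do 3 (rewrite [RHS]exchange_big; apply: eq_bigr => ? _).
exact: exchange_big.
Qed.

Lemma psd_ptrace_bound : psd (a%:R *: Z - Y).
Proof.
move=> v; rewrite hformE hformZB subr_ge0 hform_ptrace {1 2}(sum_block_move v).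
apply: le_trans (psd_hform_sum_le _ psdY) _.
rewrite ler_wpM2l ?ler0n //; apply: ler_sum => i _.
by rewrite (bigD1 i) //= lerDl; apply: sumr_ge0 => k _; exact: psd_hform_ge0.
Qed.

End PartialTraceBound.

Lemma idtens_replace1E r a' b' a b (M : 'M[C]_(a' * b') -> 'M[C]_(a * b))
    (Q : 'M[C]_b' -> 'M[C]_b) :
  is_linmap Q -> (forall X, ptrace1 (M X) = Q (ptrace1 X)) ->
  forall (X : 'M[C]_(r * (a' * b'))) p q i j e f,
  idtens (tensmap (@replace1 R a' a) Q) X (ix3 p i e) (ix3 q j f) =
  (i == j)%:R * \sum_k idtens M X (ix3 p k e) (ix3 q k f).
Proof.
move=> linQ MQ X p q i j e f; rewrite /mxtens3_index idtensE.
under eq_bigr do under eq_bigr do rewrite tensmap_replace1E // -MQ /ptrace1 mxE.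
under [X in _ * X]eq_bigr do rewrite idtensE.
rewrite [RHS]mulr_sumr; under [RHS]eq_bigr do rewrite mulr_sumr.
rewrite [RHS]exchange_big; apply: eq_bigr => s _.
under [RHS]eq_bigr do rewrite mulr_sumr.
rewrite [RHS]exchange_big; apply: eq_bigr => t _.
rewrite !mulr_sumr; apply: eq_bigr => k _.
by rewrite mulrCA.
Qed.

Lemma elog2_le (x : \bar R) (y : R) :
  0 < y -> (x <= y%:E)%E -> (elog2 x <= (log2 y)%:E)%E.
Proof.
move=> y_gt0; case: x => [x||] //=; rewrite ?leNye // lee_fin => le_xy.
case: ifPn => [_|]; first by rewrite leNye.
rewrite -ltNge lee_fin => x_gt0; rewrite /log2 ler_wpM2r ?ler_ln ?posrE //.
by rewrite invr_ge0 ltW // ln_gt0 // ltr1n.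
Qed.

Lemma Dmax_le_log2 n (rho sigma : 'M[C]_n) (lam : R) :
  0 < lam -> loewner rho ((lam%:C)%C *: sigma) -> (Dmax rho sigma <= (log2 lam)%:E)%E.
Proof.
move=> lam_gt0 le_rho; apply: elog2_le lam_gt0 _.
by apply: ereal_inf_lbound; exists lam.
Qed.

End Quantum.

Theorem proposition12 (R : realType) (a' b' a b : nat)
  (Ha' : (0 < a')%N) (Hb' : (0 < b')%N) (Ha : (0 < a)%N) (Hb : (0 < b)%N)
  (N : 'M[R[i]]_(a' * b') -> 'M[R[i]]_(a * b)) :
  is_channel N -> no_signaling N ->
  (- (log2 (a%:R : R))%:E <= Smin N)%E.
Proof.
move=> [_ cpN _] [Q [chQ NQ]]; have [linQ _ _] := chQ.
rewrite /Smin leeN2.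
apply: (@le_trans _ _ (Dmax_chan N (tensmap (@replace1 R a' a) Q))).
  by apply: ereal_inf_lbound; exists Q.
apply: ge_ereal_sup => _ [r [rho [[psd_rho _] ->]]].
apply: Dmax_le_log2; first by rewrite ltr0n.
rewrite /loewner rmorph_nat; apply: psd_ptrace_bound; first exact: cpN psd_rho.
exact: idtens_replace1E.
Qed.
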